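(* Let $N$ be a finite abelian group, $F$ a finite field, $R=F[N]$, and let $A\in R^{r_A\times n_A}$, $B\in R^{r_B\times n_B}$. Suppose the $F$-linear classical codes $C_A^\perp=\ker\boldsymbol A$ and $C_B^\perp=\ker\boldsymbol B$ are both zero. Then the quasi-abelian LP code $\mathrm{LP}[A,B]$ is trivial, i.e., has dimension $0$.
   Context: For $x\in R=F[N]$, $\mathrm L_N(x)$ is the $|N|\times|N|$ matrix $[\mathrm L_N(x)]_{\alpha,\beta}=\sum_g x_g\delta_{\alpha,g\beta}$. For a matrix $X$ over $R$, $\boldsymbol X$ denotes the matrix over $F$ obtained by replacing every entry $x$ by the block $\mathrm L_N(x)$; $\ker\boldsymbol X$ is its null space (vectors $u$ with $\boldsymbol Xu=0$). The LP code $\mathrm{LP}[A,B]$ is the CSS code over $F$ with $\boldsymbol H_X=\boldsymbol{\bigl(A\otimes I_{r_B}\ \ I_{r_A}\otimes B\bigr)}$ and $\boldsymbol H_Z=\Bigl(\boldsymbol{\begin{pmatrix}I_{n_A}\otimes B\\ -A\otimes I_{n_B}\end{pmatrix}}\Bigr)^T$, where $I_m$ is the $m\times m$ identity over $R$ and $\otimes$ is the Kronecker product over the commutative ring $R$; its dimension is $n-\mathrm{rank}\boldsymbol H_X-\mathrm{rank}\boldsymbol H_Z$ with $n=|N|(n_Ar_B+r_An_B)$. *)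

From HB Require Import structures.
From mathcomp Require Import all_boot all_order all_algebra.
Set Implicit Arguments. Unset Strict Implicit. Unset Printing Implicit Defensive.
Import GRing.Theory.
Local Open Scope ring_scope.

(* N : finite abelian group, written additively (finZmodType).
   F : finite field.  The group algebra R = F[N] is represented by the
   coefficient functions {ffun N -> F} (x = \sum_g x_g g). *)

Section LP.
Variables (F : finFieldType) (N : finZmodType).

Definition GA := {ffun N -> F}.

Definition ga_zero : GA := [ffun _ => 0].
Definition ga_one : GA := [ffun g => (g == 0)%:R].
Definition ga_opp (x : GA) : GA := [ffun g => - x g].
Definition ga_mul (x y : GA) : GA := [ffun g => \sum_h x h * y (g - h)].

Definition LN (x : GA) (a b : N) : F := \sum_g x g * (a == g + b)%:R.

Definition rmat (I J : finType) := I -> J -> GA.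

(* bold X : replace each entry x by the block L_N(x);
   row index (i, alpha), column index (j, beta) *)
Definition bold (I J : finType) (X : rmat I J) : (I * N)%type -> (J * N)%type -> F :=
  fun p q => LN (X p.1 q.1) p.2 q.2.

Definition mx_of (T U : finType) (f : T -> U -> F) : 'M[F]_(#|T|, #|U|) :=
  \matrix_(i, j) f (enum_val i) (enum_val j).

Definition ker_trivial (T U : finType) (f : T -> U -> F) :=
  forall u : 'cV[F]_(#|U|), mx_of f *m u = 0 -> u = 0.

Definition rfun m n (A : 'M[GA]_(m, n)) : rmat 'I_m 'I_n := fun i j => A i j.

Definition idR m : rmat 'I_m 'I_m := fun k l => if k == l then ga_one else ga_zero.

Definition kronR (I J K L : finType) (X : rmat I J) (Y : rmat K L)
  : rmat (I * K)%type (J * L)%type := fun p q => ga_mul (X p.1 q.1) (Y p.2 q.2).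

Definition negR (I J : finType) (X : rmat I J) : rmat I J :=
  fun i j => ga_opp (X i j).

Definition rowR (I J1 J2 : finType) (X : rmat I J1) (Y : rmat I J2)
  : rmat I (J1 + J2)%type :=
  fun i q => match q with inl j => X i j | inr j => Y i j end.

Definition colR (I1 I2 J : finType) (X : rmat I1 J) (Y : rmat I2 J)
  : rmat (I1 + I2)%type J :=
  fun p j => match p with inl i => X i j | inr i => Y i j end.

Variables (rA nA rB nB : nat).

Definition HX (A : 'M[GA]_(rA, nA)) (B : 'M[GA]_(rB, nB)) :=
  mx_of (bold (rowR (kronR (rfun A) (@idR rB)) (kronR (@idR rA) (rfun B)))).

Definition HZ (A : 'M[GA]_(rA, nA)) (B : 'M[GA]_(rB, nB)) :=
  (mx_of (bold (colR (kronR (@idR nA) (rfun B))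
                     (negR (kronR (rfun A) (@idR nB))))))^T.

Definition LP_dim (A : 'M[GA]_(rA, nA)) (B : 'M[GA]_(rB, nB)) : int :=
  (#|N| * (nA * rB + rA * nB))%:Z - (\rank (HX A B))%:Z - (\rank (HZ A B))%:Z.

End LP.

From HB Require Import structures.
From mathcomp Require Import all_boot all_order all_algebra.
Set Implicit Arguments. Unset Strict Implicit. Unset Printing Implicit Defensive.
Import GRing.Theory.
Local Open Scope ring_scope.

(* Write H_X = (A (x) I  I (x) B) and H_Z^T = (I (x) B ; -A (x) I).  Since the
   group algebra R = F[N] is commutative, H_X H_Z^T = A(I (x) B) - (I (x) B)A
   vanishes, i.e. the rows of H_Z lie in the kernel of H_X.  Conversely, the
   block L_N(x) acts on F^N as convolution by x, so ker(bold A) = 0 means that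
   bold A has full column rank, hence its transpose is onto, which yields a left
   inverse A' A = 1 over R; likewise B' B = 1.  Reading a vector of ker H_X as a
   pair of R-matrices (U, V) with A U + V B^T = 0, the left inverses exhibit
   W = U B'^T with U = W B^T and V = -A W, i.e. the vector lies in the row space
   of H_Z.  Hence rank H_Z = n - rank H_X, and the dimension is 0. *)

Section GroupAlgebra.
Variables (F : finFieldType) (N : finZmodType).

HB.instance Definition _ := GRing.Zmodule.on (GA F N).

Lemma ga_mulC : commutative (@ga_mul F N).
Proof.
move=> x y; apply/ffunP => g; rewrite !ffunE.
rewrite (reindex_inj (inv_inj (subKr g))) /=.
by apply: eq_bigr => h _; rewrite subKr mulrC.
Qed.

Lemma ga_mul1l : left_id (@ga_one F N) (@ga_mul F N).
Proof.
move=> x; apply/ffunP => g; rewrite !ffunE (bigD1 0) //= ffunE eqxx mul1r subr0.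
by rewrite big1 ?addr0 // => h /negbTE hn; rewrite ffunE hn mul0r.
Qed.

Lemma ga_mulDl : left_distributive (@ga_mul F N) +%R.
Proof.
move=> x y z; apply/ffunP => g; rewrite !ffunE -big_split /=.
by apply: eq_bigr => h _; rewrite ffunE mulrDl.
Qed.

Lemma ga_mulA : associative (@ga_mul F N).
Proof.
move=> x y z; apply/ffunP => g; rewrite !ffunE.
under eq_bigr do rewrite ffunE big_distrr /=.
under [RHS]eq_bigr do rewrite ffunE big_distrl /=.
rewrite [RHS]exchange_big /=; apply: eq_bigr => k _.
rewrite [RHS](reindex_inj (addrI k)) /=; apply: eq_bigr => m _.
by rewrite mulrA (addrC k m) addrK opprD addrA [g - m - k]addrAC.
Qed.

Lemma ga_one_neq0 : (@ga_one F N) != 0.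
Proof.
apply/eqP => /ffunP /(_ 0); rewrite !ffunE eqxx /= => /eqP.
by rewrite oner_eq0.
Qed.

HB.instance Definition _ := GRing.Zmodule_isComNzRing.Build (GA F N)
  ga_mulA ga_mulC ga_mul1l ga_mulDl ga_one_neq0.

Lemma ga_mulE (x y : GA F N) : ga_mul x y = x * y. Proof. by []. Qed.

Lemma ga_zeroE : @ga_zero F N = 0.
Proof. by apply/ffunP => g; rewrite !ffunE. Qed.

Lemma ga_oppE (x : GA F N) : ga_opp x = - x.
Proof. by apply/ffunP => g; rewrite !ffunE. Qed.

Lemma LNE (x : GA F N) a b : LN x a b = x (a - b).
Proof.
rewrite /LN (bigD1 (a - b)) //= subrK eqxx mulr1 big1 ?addr0 // => g hg.
suff -> : (a == g + b) = false by rewrite mulr0.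
by apply/negbTE; rewrite -subr_eq eq_sym.
Qed.

Lemma LN_mul (x f : GA F N) a : \sum_b LN x a b * f b = (x * f) a.
Proof.
rewrite -ga_mulE ffunE (reindex_inj (inv_inj (subKr a))) /=.
by apply: eq_bigr => h _; rewrite LNE subKr.
Qed.

Lemma sum_pairE (V : nmodType) (I J : finType) (G : I * J -> V) :
  \sum_p G p = \sum_i \sum_j G (i, j).
Proof. by rewrite pair_bigA; apply: eq_bigr => -[]. Qed.

Definition vecR (J : finType) (f : J * N -> F) (j : J) : GA F N :=
  [ffun b => f (j, b)].

Lemma bold_mul (I J : finType) (X : rmat F N I J) (f : J * N -> F) p :
  \sum_q bold X p q * f q = (\sum_j X p.1 j * vecR f j) p.2.
Proof.
rewrite sum_pairE sum_ffunE; apply: eq_bigr => j _.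
by rewrite -LN_mul; apply: eq_bigr => b _; rewrite ffunE.
Qed.

Lemma idR_diag m (k : 'I_m) : @idR F N m k k = 1.
Proof. by rewrite /idR eqxx. Qed.

Lemma idR_offdiag m (k l : 'I_m) : l != k -> @idR F N m k l = 0.
Proof. by rewrite /idR eq_sym => /negbTE ->; rewrite ga_zeroE. Qed.

End GroupAlgebra.

Section FunctionMatrices.
Variable F : finFieldType.

Definition vec (T : finType) (f : T -> F) : 'rV[F]_#|T| := \row_i f (enum_val i).

Lemma vec_of (T : finType) (r : 'rV[F]_#|T|) : r = vec (fun t => r 0 (enum_rank t)).
Proof. by apply/rowP => k; rewrite !mxE enum_valK. Qed.

Lemma vec_ext (T : finType) (f g : T -> F) : f =1 g -> vec f = vec g.
Proof. by move=> fg; apply/rowP => k; rewrite !mxE fg. Qed.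

Lemma vec_inj (T : finType) (f g : T -> F) : vec f = vec g -> f =1 g.
Proof. by move=> /rowP fg t; move: (fg (enum_rank t)); rewrite !mxE enum_rankK. Qed.

Lemma vec_mul_tr (T U : finType) (M : U -> T -> F) (f : T -> F) :
  vec f *m (mx_of M)^T = vec (fun u => \sum_t M u t * f t).
Proof.
apply/rowP => k; rewrite !mxE.
rewrite [RHS](reindex (fun i : 'I_#|T| => enum_val i)); last first.
  by apply: onW_bij; apply: enum_val_bij.
by apply: eq_bigr => i _; rewrite !mxE mulrC.
Qed.

Lemma mx_of_tr (T U : finType) (M : T -> U -> F) :
  (mx_of (fun u t => M t u))^T = mx_of M.
Proof. by apply/matrixP => i j; rewrite !mxE. Qed.

(* A matrix with trivial kernel has full column rank, so every vector is a
   combination of its rows. *)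
Lemma ker_trivial_rows_span (T U : finType) (M : T -> U -> F) : ker_trivial M ->
  forall t : U -> F, exists y : T -> F, forall q, t q = \sum_p y p * M p q.
Proof.
move=> kerM t.
have kerT : kermx (mx_of M)^T = 0.
  apply/row_matrixP => i; rewrite row0; apply: trmx_inj; rewrite trmx0.
  apply: kerM.
  by rewrite -[X in X *m _]trmxK -trmx_mul -row_mul mulmx_ker row0 trmx0.
have full : row_full (mx_of M).
  have := mxrank_ker (mx_of M)^T; rewrite kerT mxrank0 mxrank_tr => /esym/eqP.
  by rewrite subn_eq0 /row_full eqn_leq rank_leq_col.
have /submxP [D defD] := submx_full (vec t) full.
exists (fun p => D 0 (enum_rank p)) => q.
move: defD; rewrite {1}(vec_of D) -mx_of_tr vec_mul_tr => /vec_inj ->.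
by apply: eq_bigr => p _; rewrite mulrC.
Qed.

End FunctionMatrices.

Lemma left_inv_exact (R : comPzRingType) rA nA rB nB
    (A : 'M[R]_(rA, nA)) (B : 'M[R]_(rB, nB)) A' B' U V :
  A' *m A = 1%:M -> B' *m B = 1%:M -> A *m U + V *m B^T = 0 ->
  U = (U *m B'^T) *m B^T /\ V = - (A *m (U *m B'^T)).
Proof.
move=> invA invB eqUV.
have invBt : B^T *m B'^T = 1%:M by rewrite -trmx_mul invB trmx1.
have AU : A *m U = - (V *m B^T) by apply/eqP; rewrite -addr_eq0 eqUV.
have defU : U = - (A' *m V *m B^T).
  by rewrite -[U]mul1mx -invA -mulmxA AU mulmxN mulmxA.
split; last by rewrite mulmxA AU mulNmx opprK -mulmxA invBt mulmx1.
by rewrite {2}defU !mulNmx -[_ *m B'^T]mulmxA invBt mulmx1 -defU.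
Qed.

Section LeftInverse.
Variables (F : finFieldType) (N : finZmodType).

(* ker(bold A) = 0 gives a left inverse of A over F[N]: solve bold(A)^T y = e
   for the vectors e encoding the unit R-vectors. *)
Lemma ker_trivial_left_inv m n (A : 'M[GA F N]_(m, n)) :
  ker_trivial (bold (rfun A)) -> exists A' : 'M[GA F N]_(n, m), A' *m A = 1%:M.
Proof.
move=> /ker_trivial_rows_span span.
have rows j : exists z : 'I_m -> GA F N,
    forall j', \sum_i z i * A i j' = (j == j')%:R.
  have [y defy] := span (fun q => ((j == q.1)%:R : GA F N) (- q.2)).
  exists (fun i => [ffun h => y (i, - h)]) => j'.
  apply/ffunP => b; have := defy (j', - b); rewrite /= opprK => ->.
  rewrite sum_pairE sum_ffunE; apply: eq_bigr => i _.
  rewrite -ga_mulE ffunE (reindex_inj oppr_inj) /=.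
  by apply: eq_bigr => a _; rewrite ffunE opprK /bold /= LNE /rfun opprK addrC.
have [Z defZ] := fin_all_exists rows.
exists (\matrix_(j, i) Z j i); apply/matrixP => j j'; rewrite !mxE -defZ.
by apply: eq_bigr => i _; rewrite mxE.
Qed.

End LeftInverse.

Section LiftedProduct.
Variables (F : finFieldType) (N : finZmodType).
Variables (rA nA rB nB : nat) (A : 'M[GA F N]_(rA, nA)) (B : 'M[GA F N]_(rB, nB)).

Definition qubit := (('I_nA * 'I_rB) + ('I_rA * 'I_nB))%type.

Definition leftM (u : qubit -> GA F N) : 'M[GA F N]_(nA, rB) :=
  \matrix_(j, k) u (inl (j, k)).
Definition rightM (u : qubit -> GA F N) : 'M[GA F N]_(rA, nB) :=
  \matrix_(i, l) u (inr (i, l)).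
Definition checkM (w : 'I_nA * 'I_nB -> GA F N) : 'M[GA F N]_(nA, nB) :=
  \matrix_(j, l) w (j, l).

Definition HXfun := bold (rowR (kronR (rfun A) (@idR F N rB)) (kronR (@idR F N rA) (rfun B))).
Definition HZfun :=
  bold (colR (kronR (@idR F N nA) (rfun B)) (negR (kronR (rfun A) (@idR F N nB)))).

Lemma HXfun_mul (f : qubit * N -> F) i k a :
  \sum_q HXfun ((i, k), a) q * f q = (A *m leftM (vecR f) + rightM (vecR f) *m B^T) i k a.
Proof.
rewrite /HXfun bold_mul big_sumType /= !mxE !sum_pairE; congr (_ _ a).
congr (_ + _).
  apply: eq_bigr => j _; rewrite /kronR /= (bigD1 k) //= ga_mulE idR_diag mulr1.
  by rewrite big1 ?addr0 ?mxE // => l kl; rewrite ga_mulE idR_offdiag // mulr0 mul0r.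
rewrite (bigD1 i) //= [X in _ + X]big1 ?addr0.
  by apply: eq_bigr => l _; rewrite /kronR ga_mulE idR_diag mul1r !mxE mulrC.
move=> i' ii'; apply: big1 => l _.
by rewrite /kronR ga_mulE idR_offdiag // !mul0r.
Qed.

Lemma HZfun_mul (g : ('I_nA * 'I_nB) * N -> F) q :
  \sum_c HZfun q c * g c =
  (match q.1 with inl (j, k) => (checkM (vecR g) *m B^T) j k
                | inr (i, l) => (- (A *m checkM (vecR g))) i l end) q.2.
Proof.
rewrite /HZfun bold_mul; congr (_ _ q.2).
case: q.1 => [[j k]|[i l]] /=; rewrite sum_pairE !mxE.
  rewrite (bigD1 j) //= [X in _ + X]big1 ?addr0.
    by apply: eq_bigr => l _; rewrite /kronR ga_mulE idR_diag mul1r !mxE mulrC.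
  move=> j' jj'; apply: big1 => l _.
  by rewrite /kronR ga_mulE idR_offdiag // !mul0r.
rewrite -sumrN; apply: eq_bigr => j _.
rewrite (bigD1 l) //= [X in _ + X]big1 ?addr0.
  by rewrite /negR /kronR ga_oppE ga_mulE idR_diag mulr1 mulNr !mxE.
move=> l' ll'.
by rewrite /negR /kronR ga_oppE ga_mulE idR_offdiag // mulr0 oppr0 mul0r.
Qed.

Definition HZimage (g : ('I_nA * 'I_nB) * N -> F) (q : qubit * N) : F :=
  \sum_c HZfun q c * g c.

Lemma HZimage_blocks (g : ('I_nA * 'I_nB) * N -> F) :
  leftM (vecR (HZimage g)) = checkM (vecR g) *m B^T /\
  rightM (vecR (HZimage g)) = - (A *m checkM (vecR g)).
Proof.
by split; apply/matrixP => j l; rewrite mxE; apply/ffunP => b;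
  rewrite ffunE /HZimage HZfun_mul // mxE.
Qed.

Lemma HZ_sub_kerHX : (HZ A B <= kermx (HX A B)^T)%MS.
Proof.
apply/sub_kermxP; apply/row_matrixP => c; rewrite row0 row_mul rowE.
rewrite (vec_of (delta_mx 0 c)) [HZ A B]/HZ vec_mul_tr [HX A B]/HX vec_mul_tr.
rewrite [RHS](vec_of 0); apply: vec_ext => -[[i k] a].
pose g t : F := (delta_mx 0 c : 'rV_#|_|) 0 (enum_rank t).
have [eqU eqV] := HZimage_blocks g.
by rewrite mxE (HXfun_mul (HZimage g)) eqU eqV mulmxA mulNmx addrN mxE ffunE.
Qed.

Lemma kerHX_sub_HZ : ker_trivial (bold (rfun A)) -> ker_trivial (bold (rfun B)) ->
  (kermx (HX A B)^T <= HZ A B)%MS.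
Proof.
move=> /ker_trivial_left_inv [A' invA] /ker_trivial_left_inv [B' invB].
apply/row_subP => r; set x := row r _.
have : x *m (HX A B)^T = 0 by rewrite /x -row_mul mulmx_ker row0.
rewrite (vec_of x) [HX A B]/HX vec_mul_tr [X in _ = X](vec_of 0) => /vec_inj kerx.
set f := fun t => x 0 (enum_rank t).
have eqUV : A *m leftM (vecR f) + rightM (vecR f) *m B^T = 0.
  by apply/matrixP => i k; apply/ffunP => a; rewrite -HXfun_mul kerx !mxE ffunE.
have [defU defV] := left_inv_exact invA invB eqUV.
set W := leftM (vecR f) *m B'^T in defU defV *.
pose g (c : ('I_nA * 'I_nB) * N) := W c.1.1 c.1.2 c.2.
have gW : checkM (vecR g) = W.
  by apply/matrixP => j l; rewrite mxE; apply/ffunP => b; rewrite ffunE.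
apply/submxP; exists (vec g); rewrite [HZ A B]/HZ vec_mul_tr.
apply: vec_ext => -[[[j k]|[i l]] a]; rewrite HZfun_mul gW /=.
  by rewrite -defU mxE ffunE.
by rewrite -defV mxE ffunE.
Qed.

Lemma card_qubits :
  #|{: ('I_nA * 'I_rB + 'I_rA * 'I_nB) * N}| = (#|N| * (nA * rB + rA * nB))%N.
Proof. by rewrite card_prod card_sum !card_prod !card_ord mulnC. Qed.

End LiftedProduct.

Theorem mainTheorem11 (F : finFieldType) (N : finZmodType)
    (rA nA rB nB : nat) (A : 'M[GA F N]_(rA, nA)) (B : 'M[GA F N]_(rB, nB)) :
  ker_trivial (bold (rfun A)) ->
  ker_trivial (bold (rfun B)) ->
  LP_dim A B = 0.
Proof.
move=> kerA kerB.
have rowsHZ : (HZ A B == kermx (HX A B)^T)%MS.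
  by rewrite HZ_sub_kerHX kerHX_sub_HZ.
rewrite /LP_dim (eqmx_rank rowsHZ) mxrank_ker mxrank_tr.
have rankHX := rank_leq_col (HX A B).
by rewrite -(subzn rankHX) -card_qubits subrr.
Qed.
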